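(* Let $(Y,\preceq,\prec,\to)$ be a normal solid vector space. Then: (C8) each subsequence of a convergent sequence converges to the same limit; (C9) the convergence of a sequence and its limit do not depend on finitely many of its terms; (C10) if $\lambda_n\to\lambda$ in $\mathbb R$ and $x_n\to x$, then $\lambda_nx_n\to\lambda x$; (C11) if $\lambda_n\to0$ in $\mathbb R$ and $(x_n)$ is bounded in $Y$ (there exist $a,b\in Y$ with $a\preceq x_n\preceq b$ for all $n$), then $\lambda_nx_n\to0$; (C12) if $(\lambda_n)$ is a bounded real sequence and $x_n\to0$, then $\lambda_nx_n\to0$; (C13) for every sequence $(x_n)$ in $Y$ and $x\in Y$, $x_n\to x$ if and only if for every $c\succ0$ there exists $N\in\mathbb N$ with $x-c\prec x_n\prec x+c$ for all $n>N$.
   Context: Vector space with convergence: a real vector space $Y$ with a relation $\to$ between sequences in $Y$ and points of $Y$ (uniqueness of limits not assumed) such that (C1) $x_n\to x$, $y_n\to y$ imply $x_n+y_n\to x+y$; (C2) $x_n\to x$, $\lambda\in\mathbb R$ imply $\lambda x_n\to\lambda x$; (C3) $\lambda_n\to\lambda$ in $\mathbb R$ imply $\lambda_n x\to\lambda x$. $A\subseteq Y$ is open if $x_n\to x\in A$ implies $x_n\in A$ for all but finitely many $n$; closed if $x_n\to x$, $x_n\in A$ $\forall n$ imply $x\in A$; $A^\circ$ is the union of all open subsets of $A$. A cone is a nonempty closed $K$ with $\lambda K\subseteq K$ ($\lambda\ge0$), $K+K\subseteq K$, $K\cap(-K)=\{0\}$; solid if $K\ne\{0\}$, $K^\circ\ne\emptyset$.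 A vector ordering is a partial order $\preceq$ with (V1) $x\preceq y\Rightarrow x+z\preceq y+z$; (V2) $\lambda\ge0$, $x\preceq y\Rightarrow\lambda x\preceq\lambda y$; (V3) $x_n\to x$, $y_n\to y$, $x_n\preceq y_n$ $\forall n\Rightarrow x\preceq y$. Solid vector space: positive cone $K=\{x:x\succeq0\}$ solid, with $x\prec y$ iff $y-x\in K^\circ$. Normal: whenever $x_n\preceq y_n\preceq z_n$ for all $n$, $x_n\to x$ and $z_n\to x$, then $y_n\to x$. *)

From HB Require Import structures.
From mathcomp Require Import all_boot all_order all_algebra.
From mathcomp Require Import all_classical all_reals all_analysis.
Set Implicit Arguments. Unset Strict Implicit. Unset Printing Implicit Defensive.
Import Order.TTheory GRing.Theory Num.Theory numFieldNormedType.Exports.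
Local Open Scope classical_set_scope.
Local Open Scope ring_scope.

Section VSC.
Variables (R : realType) (Y : lmodType R).
Variable conv : (nat -> Y) -> Y -> Prop.   (* x_n -> x, limits not unique *)
Variable le : Y -> Y -> Prop.

Definition vsc_axioms : Prop :=
  [/\ (forall (x y : nat -> Y) (a b : Y), conv x a -> conv y b ->
         conv (fun n => x n + y n) (a + b)),
      (forall (x : nat -> Y) (a : Y) (l : R), conv x a ->
         conv (fun n => l *: x n) (l *: a)) &
      (forall (lam : nat -> R) (l : R) (x : Y), lam @ \oo --> l ->
         conv (fun n => lam n *: x) (l *: x))].

Definition conv_open (A : set Y) : Prop :=
  forall (x : nat -> Y) (a : Y), conv x a -> A a ->
    exists N : nat, forall n, (N <= n)%N -> A (x n).

Definition conv_closed (A : set Y) : Prop :=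
  forall (x : nat -> Y) (a : Y), conv x a -> (forall n, A (x n)) -> A a.

Definition conv_interior (A : set Y) : set Y :=
  fun a => exists U : set Y, [/\ conv_open U, U `<=` A & U a].

Definition is_cone (K : set Y) : Prop :=
  [/\ K !=set0, conv_closed K,
      (forall (l : R) (x : Y), 0 <= l -> K x -> K (l *: x)),
      (forall x y, K x -> K y -> K (x + y)) &
      K `&` [set - x | x in K] = [set 0]].

Definition is_solid_cone (K : set Y) : Prop :=
  [/\ is_cone K, K <> [set 0] & conv_interior K !=set0].

Definition vector_ordering : Prop :=
  [/\ (forall x, le x x) /\
      (forall x y, le x y -> le y x -> x = y) /\
      (forall x y z, le x y -> le y z -> le x z),
      (forall x y z, le x y -> le (x + z) (y + z)),
      (forall (l : R) x y, 0 <= l -> le x y -> le (l *: x) (l *: y)) &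
      (forall (x y : nat -> Y) (a b : Y), conv x a -> conv y b ->
         (forall n, le (x n) (y n)) -> le a b)].

Definition pos_cone : set Y := fun x => le 0 x.

Definition slt (x y : Y) : Prop := conv_interior pos_cone (y - x).

Definition normal : Prop :=
  forall (x y z : nat -> Y) (a : Y),
    (forall n, le (x n) (y n) /\ le (y n) (z n)) ->
    conv x a -> conv z a -> conv y a.

Definition normal_solid_vector_space : Prop :=
  [/\ vsc_axioms, vector_ordering, is_solid_cone pos_cone & normal].

End VSC.

From HB Require Import structures.
From mathcomp Require Import all_boot all_order all_algebra.
From mathcomp Require Import all_classical all_reals all_analysis.
From mathcomp Require Import lra.
Set Implicit Arguments. Unset Strict Implicit. Unset Printing Implicit Defensive.
Import Order.TTheory GRing.Theory Num.Theory numFieldNormedType.Exports.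
Local Open Scope classical_set_scope.
Local Open Scope ring_scope.

(* Fix c in the interior K° of the positive cone.  Every y lies in some order
   interval [-t c, t c] (c is absorbing), and if y is in [-t c, t c] then
   c + mu y stays in K° as soon as |mu| t < 1.  Together with the openness of
   K° this turns convergence into the order characterisation (C13): x_n -> x
   gives x - c ≺ x_n ≺ x + c eventually, and conversely the order condition
   squeezes x_n between x - eps_n c and x + eps_n c with eps_n -> 0, so
   normality yields x_n -> x.  Properties (C8)-(C12) are then read off (C13). *)

Lemma exists_le_bounds (d : Order.disp_t) (T : orderType d) (S : T -> Prop)
    (b : nat -> T) (P : pred nat) (t0 : T) (m : nat) :
  S t0 -> (forall k, P k -> S (b k)) ->
  exists t, S t /\ forall k, (k < m)%N -> P k -> (t <= b k)%O.
Proof.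
move=> St0 Sb; elim: m => [|m [t [St tb]]]; first by exists t0.
have lt_m k : (k < m.+1)%N -> k = m \/ (k < m)%N.
  by rewrite ltnS leq_eqVlt => /orP[/eqP->|]; [left | right].
case Pm: (P m); last first.
  by exists t; split=> // k /lt_m[-> | /tb//]; rewrite Pm.
case: (leP t (b m)) => [tbm | bmt].
  by exists t; split=> // k /lt_m[-> | /tb//].
exists (b m); split=> [|k /lt_m[-> // | km /(tb _ km) tbk]]; first exact: Sb.
exact: le_trans (ltW bmt) tbk.
Qed.

Section NormalSolidVectorSpace.
Variables (R : realType) (Y : lmodType R).
Variables (conv : (nat -> Y) -> Y -> Prop) (le : Y -> Y -> Prop).
Hypothesis HY : normal_solid_vector_space conv le.

Local Notation "x ≼ y" := (le x y) (at level 70).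
Local Notation "x ≺ y" := (slt conv le x y) (at level 70).
Local Notation Kint := (conv_interior conv (pos_cone le)).

Lemma conv_add x y a b :
  conv x a -> conv y b -> conv (fun n => x n + y n) (a + b).
Proof. by case: HY => -[add _ _] _ _ _; apply: add. Qed.

Lemma conv_scale x a (l : R) : conv x a -> conv (fun n => l *: x n) (l *: a).
Proof. by case: HY => -[_ scale _] _ _ _; apply: scale. Qed.

Lemma conv_scalel (lam : nat -> R) (l : R) z :
  lam @ \oo --> l -> conv (fun n => lam n *: z) (l *: z).
Proof. by case: HY => -[_ _ scalel] _ _ _; apply: scalel. Qed.

Lemma conv_cst z : conv (fun=> z) z.
Proof.
have one : (fun=> 1) @ \oo --> (1 : R) by exact: cvg_cst.
by have := conv_scalel z one; rewrite scale1r.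
Qed.

Lemma conv_addr x a z : conv x a -> conv (fun n => x n + z) (a + z).
Proof. by move=> xa; apply: conv_add xa (conv_cst z). Qed.

Lemma conv_add_vanishing a (lam : nat -> R) z :
  lam @ \oo --> 0 -> conv (fun n => a + lam n *: z) a.
Proof.
by move=> lam0; have := conv_add (conv_cst a) (conv_scalel z lam0); rewrite scale0r addr0.
Qed.

Lemma ord_trans y x z : x ≼ y -> y ≼ z -> x ≼ z.
Proof. by case: HY => _ [[_ [_ trans]] _ _ _] _ _; apply: trans. Qed.

Lemma ord_addr x y z : x ≼ y -> x + z ≼ y + z.
Proof. by case: HY => _ [_ addr _ _] _ _; apply: addr. Qed.

Lemma ord_subr_ge0 x y : x ≼ y <-> 0 ≼ y - x.
Proof.
split=> [/(ord_addr (- x)) | /(ord_addr x)]; first by rewrite subrr.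
by rewrite add0r subrK.
Qed.

Lemma pos_cone_add x y : 0 ≼ x -> 0 ≼ y -> 0 ≼ x + y.
Proof. by case: HY => _ _ [[_ _ _ add _] _ _] _; apply: add. Qed.

Lemma pos_cone_scale (t : R) x : 0 <= t -> 0 ≼ x -> 0 ≼ t *: x.
Proof. by case: HY => _ _ [[_ _ scale _ _] _ _] _; apply: scale. Qed.

Lemma interior_nonempty : exists c, Kint c.
Proof. by case: HY => _ _ [_ _ [c ci]] _; exists c. Qed.

Lemma interior_pos u : Kint u -> 0 ≼ u.
Proof. by case=> U [_ UK /UK]. Qed.

Lemma slt0E c : 0 ≺ c <-> Kint c.
Proof. by rewrite /slt subr0. Qed.

Lemma slt_le x y : x ≺ y -> x ≼ y.
Proof. by move=> /interior_pos; rewrite -ord_subr_ge0. Qed.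

Lemma interior_eventually x a :
  conv x a -> Kint a -> exists N, forall n, (N <= n)%N -> Kint (x n).
Proof.
move=> xa [U [Uopen UK Ua]]; have [N xU] := Uopen x a xa Ua.
by exists N => n /xU Uxn; exists U.
Qed.

Lemma interior_scale (t : R) u : 0 < t -> Kint u -> Kint (t *: u).
Proof.
move=> t0 [U [Uopen UK Uu]]; exists [set y | U (t^-1 *: y)]; split.
- by move=> x a xa /= Ua; apply: Uopen (conv_scale t^-1 xa) Ua.
- move=> y /= /UK /(pos_cone_scale (ltW t0)).
  by rewrite scalerA mulfV ?gt_eqF // scale1r.
- by rewrite /= scalerA mulVf ?gt_eqF // scale1r.
Qed.

Lemma interior_addr u k : Kint u -> 0 ≼ k -> Kint (u + k).
Proof.
move=> [U [Uopen UK Uu]] k0; exists [set y | U (y - k)]; split.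
- by move=> x a xa /= Ua; apply: Uopen (conv_addr (- k) xa) Ua.
- by move=> y /= /UK /pos_cone_add /(_ k0); rewrite subrK.
- by rewrite /= addrK.
Qed.

Definition order_interval (c : Y) : set Y := [set y | - c ≼ y /\ y ≼ c].

Lemma order_interval_subr c a y :
  order_interval c (y - a) <-> a - c ≼ y /\ y ≼ a + c.
Proof.
rewrite /order_interval /= !(ord_subr_ge0 (- c)) !(ord_subr_ge0 _ c).
rewrite (ord_subr_ge0 (a - c)) (ord_subr_ge0 _ (a + c)).
have -> : y - a - - c = y - (a - c) by rewrite opprK opprB addrA addrAC.
by have -> : c - (y - a) = a + c - y by rewrite opprB addrA [c + a]addrC.
Qed.

Lemma order_interval_widen c (s t : R) y : 0 ≼ c -> s <= t ->
  order_interval (s *: c) y -> order_interval (t *: c) y.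
Proof.
move=> c0 st [sy ys]; have tsc : 0 ≼ t *: c - s *: c.
  by rewrite -scalerBl; apply: pos_cone_scale; rewrite // subr_ge0.
split; [apply: ord_trans sy | apply: ord_trans ys _]; apply/ord_subr_ge0 => //.
by rewrite opprK addrC.
Qed.

Lemma interior_absorbing c y :
  Kint c -> exists2 t : R, 0 <= t & order_interval (t *: c) y.
Proof.
move=> ci.
have hm : (fun n => - harmonic n) @ \oo --> (0 : R).
  by rewrite -oppr0; apply: cvgN; exact: cvg_harmonic.
have [N1 HN1] := interior_eventually (conv_add_vanishing c y hm) ci.
have [N2 HN2] := interior_eventually (conv_add_vanishing c y (@cvg_harmonic R)) ci.
pose N := maxn N1 N2.
exists (N.+1%:R) => //; split; apply/ord_subr_ge0.
- have := pos_cone_scale (ler0n _ N.+1) (interior_pos (HN2 N (leq_maxr _ _))).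
  by rewrite scalerDr scalerA mulfV // scale1r opprK addrC.
- have := pos_cone_scale (ler0n _ N.+1) (interior_pos (HN1 N (leq_maxl _ _))).
  by rewrite scalerDr scalerA mulrN mulfV // scaleNr scale1r.
Qed.

(* c + mu y = (1 - |mu| t) c + |mu| (t c +- y), with both summands in the cone
   and the first one interior. *)
Lemma interior_add_scale c y (t mu : R) :
  Kint c -> order_interval (t *: c) y -> `|mu| * t < 1 -> Kint (c + mu *: y).
Proof.
move=> ci [ly uy] small.
have -> : c + mu *: y = (1 - `|mu| * t) *: c + (`|mu| *: (t *: c) + mu *: y).
  by rewrite scalerBl scale1r scalerA -addrA addKr.
apply: interior_addr; first by apply: interior_scale ci; rewrite subr_gt0.
have [mu0 | mu0] := lerP 0 mu.
  rewrite ger0_norm // -scalerDr; apply: pos_cone_scale => //.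
  by move/ord_subr_ge0: ly; rewrite opprK addrC.
have -> : mu *: y = - ((- mu) *: y) by rewrite scaleNr opprK.
rewrite ltr0_norm // -scalerBr; apply: pos_cone_scale.
  by rewrite oppr_ge0 ltW.
exact: (ord_subr_ge0 _ _).1 uy.
Qed.

Lemma slt_scale_bounded c y (t mu : R) :
  0 ≺ c -> order_interval (t *: c) y -> `|mu| * t < 1 ->
  - c ≺ mu *: y /\ mu *: y ≺ c.
Proof.
move=> /slt0E ci yt small; rewrite /slt opprK addrC -scaleNr; split.
  exact: interior_add_scale yt small.
by apply: interior_add_scale yt _; rewrite ?normrN.
Qed.

Definition order_cvg (x : nat -> Y) (a : Y) : Prop :=
  forall c, 0 ≺ c ->
    exists N : nat, forall n, (N < n)%N -> a - c ≺ x n /\ x n ≺ a + c.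

Lemma conv_order_cvg x a : conv x a -> order_cvg x a.
Proof.
move=> xa c /slt0E ci.
have lo : conv (fun n => x n + (c - a)) c.
  by have := conv_addr (c - a) xa; rewrite [a + _]addrC subrK.
have up : conv (fun n => (-1) *: x n + (a + c)) c.
  by have := conv_addr (a + c) (conv_scale (-1) xa); rewrite scaleN1r addKr.
have [N1 HN1] := interior_eventually lo ci; have [N2 HN2] := interior_eventually up ci.
exists (maxn N1 N2) => n; rewrite gtn_max => /andP[/ltnW/HN1 + /ltnW/HN2].
by rewrite /slt opprB scaleN1r [_ + (a + c)]addrC; split.
Qed.

Lemma conv_squeeze x a c (eps : nat -> R) : eps @ \oo --> 0 ->
  (forall n, order_interval (eps n *: c) (x n - a)) -> conv x a.
Proof.
move=> eps0 bound; case: HY => _ _ _ normal.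
have eps0N : (fun n => - eps n) @ \oo --> (0 : R) by rewrite -oppr0; apply: cvgN.
apply: (normal _ _ _ _ _ (conv_add_vanishing a c eps0N) (conv_add_vanishing a c eps0)).
by move=> n; rewrite scaleNr; apply/order_interval_subr.
Qed.

Lemma order_cvg_bound x a c : Kint c -> order_cvg x a ->
  exists eps : nat -> R, eps @ \oo --> 0 /\
    forall n, order_interval (eps n *: c) (x n - a).
Proof.
move=> ci xa.
have [N HN] := choice (fun k => xa _ ((slt0E _).2 (interior_scale (harmonic_gt0 k) ci))).
pose S n t := 0 <= t /\ order_interval (t *: c) (x n - a).
(* eps n is the least of the bounds 1/(k+1), k < n, already valid at time n. *)
have boundS n : exists t, S n t /\ forall k, (k < n)%N -> (N k < n)%N -> t <= harmonic k.
  have [t0 t0_ge0 t0S] := interior_absorbing (x n - a) ci.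
  apply: (exists_le_bounds (t0 := t0)) => [// | k /HN[lo up]].
  by split; [exact: harmonic_ge0 | apply/order_interval_subr; split; apply: slt_le].
have [eps Heps] := choice boundS; exists eps; split=> [|n]; last by case: (Heps n).1.
apply/cvgr0Pnorm_lt => e e0.
have [k _ hk] := (cvgr0Pnorm_lt _).1 (@cvg_harmonic R) e e0.
exists (maxn (N k) k).+1 => // n /=; rewrite gtn_max => /andP[Nkn kn].
have [[eps_ge0 _] eps_le] := Heps n.
rewrite ger0_norm //; apply: le_lt_trans (eps_le k kn Nkn) _.
by have := hk k (leqnn k); rewrite /= ger0_norm.
Qed.

Lemma conv_order_cvgE x a : conv x a <-> order_cvg x a.
Proof.
split; first exact: conv_order_cvg.
have [c ci] := interior_nonempty.
by move=> /(order_cvg_bound ci)[eps [eps0 bound]]; apply: conv_squeeze eps0 bound.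
Qed.

Lemma conv_comp x a (phi : nat -> nat) :
  (forall N, exists M, forall n, (M < n)%N -> (N < phi n)%N) ->
  conv x a -> conv (x \o phi) a.
Proof.
move=> phi_oo /conv_order_cvgE xa; apply/conv_order_cvgE => c /xa[N HN].
by have [M HM] := phi_oo N; exists M => n /HM /HN.
Qed.

Lemma conv_eq_eventually x y a :
  (exists N, forall n, (N <= n)%N -> x n = y n) -> conv x a -> conv y a.
Proof.
move=> [N0 xy] /conv_order_cvgE xa; apply/conv_order_cvgE => c /xa[N HN].
exists (maxn N N0) => n; rewrite gtn_max => /andP[/HN + /ltnW/xy].
by move=> + <-.
Qed.

Lemma conv_scale_bounded (lam : nat -> R) x :
  (exists M : R, forall n, `|lam n| <= M) ->
  conv x 0 -> conv (fun n => lam n *: x n) 0.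
Proof.
move=> [M HM] /conv_order_cvgE x0; apply/conv_order_cvgE => c c0.
have M1 : 0 < M + 1 by rewrite ltr_wpDl // (le_trans _ (HM 0%N)).
have M1V : 0 < (M + 1)^-1 by rewrite invr_gt0.
have [N HN] := x0 _ ((slt0E _).2 (interior_scale M1V ((slt0E _).1 c0))).
exists N => n /HN; rewrite sub0r add0r => -[/slt_le lo /slt_le up].
rewrite sub0r add0r; apply: slt_scale_bounded (conj lo up) _ => //.
by rewrite ltr_pdivrMr // mul1r (le_lt_trans (HM n)) // ltrDl.
Qed.

Lemma conv_scale_vanishing (lam : nat -> R) x :
  lam @ \oo --> 0 -> (exists a b, forall n, a ≼ x n /\ x n ≼ b) ->
  conv (fun n => lam n *: x n) 0.
Proof.
move=> lam0 [a [b ab]]; apply/conv_order_cvgE => c c0.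
have cK := interior_pos ((slt0E _).1 c0).
have [ta ta0 ha] := interior_absorbing a ((slt0E _).1 c0).
have [tb tb0 hb] := interior_absorbing b ((slt0E _).1 c0).
have [wa wb] : ta <= ta + tb /\ tb <= ta + tb by split; lra.
have [la _] := order_interval_widen cK wa ha.
have [_ ub] := order_interval_widen cK wb hb.
have bound n : order_interval ((ta + tb) *: c) (x n).
  by split; [apply: ord_trans la (ab n).1 | apply: ord_trans (ab n).2 ub].
have t1 : 0 < (ta + tb + 1)^-1 by rewrite invr_gt0; lra.
have [N _ HN] := (cvgr0Pnorm_lt _).1 lam0 _ t1.
exists N => n /ltnW/HN small; rewrite sub0r add0r.
apply: slt_scale_bounded c0 (bound n) _.
have : `|lam n| * (ta + tb + 1) < 1 by rewrite -ltr_pdivlMr ?div1r //; lra.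
by apply: le_lt_trans; rewrite ler_wpM2l //; lra.
Qed.

Lemma conv_scale_cvg (lam : nat -> R) (l : R) x a :
  lam @ \oo --> l -> conv x a -> conv (fun n => lam n *: x n) (l *: a).
Proof.
move=> laml xa.
have lam_bounded : exists M : R, forall n, `|lam n| <= M.
  have [M [_ HM]] := cvg_seq_bounded (cvgP _ laml).
  by exists (`|M| + 1) => n; apply: HM => //; rewrite (le_lt_trans (ler_norm _)) ?ltrDl.
have xa0 : conv (fun n => x n - a) 0 by have := conv_addr (- a) xa; rewrite subrr.
have laml0 : (fun n => lam n - l) @ \oo --> (0 : R).
  by rewrite -(subrr l); apply: cvgB => //; exact: cvg_cst.
have := conv_addr (l *: a) (conv_add (conv_scale_bounded lam_bounded xa0) (conv_scalel a laml0)).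
rewrite scale0r !add0r; congr conv; apply/funext => n.
by rewrite scalerBr scalerBl addrA subrK subrK.
Qed.

End NormalSolidVectorSpace.

Theorem theorem7p10 (R : realType) (Y : lmodType R)
  (conv : (nat -> Y) -> Y -> Prop) (le : Y -> Y -> Prop)
  (HY : normal_solid_vector_space conv le) :
  (* (C8) *)
  (forall (x : nat -> Y) (a : Y) (phi : nat -> nat),
     (forall n, (phi n < phi n.+1)%N) -> conv x a -> conv (x \o phi) a) /\
  (* (C9) *)
  (forall (x y : nat -> Y) (a : Y),
     (exists N : nat, forall n, (N <= n)%N -> x n = y n) ->
     (conv x a <-> conv y a)) /\
  (forall (x : nat -> Y) (a : Y) (k : nat),
     conv x a <-> conv (fun n => x (n + k)%N) a) /\
  (* (C10) *)
  (forall (lam : nat -> R) (l : R) (x : nat -> Y) (a : Y),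
     lam @ \oo --> l -> conv x a -> conv (fun n => lam n *: x n) (l *: a)) /\
  (* (C11) *)
  (forall (lam : nat -> R) (x : nat -> Y),
     lam @ \oo --> (0 : R) ->
     (exists a b : Y, forall n, le a (x n) /\ le (x n) b) ->
     conv (fun n => lam n *: x n) 0) /\
  (* (C12) *)
  (forall (lam : nat -> R) (x : nat -> Y),
     (exists M : R, forall n, `|lam n| <= M) ->
     conv x 0 -> conv (fun n => lam n *: x n) 0) /\
  (* (C13) *)
  (forall (x : nat -> Y) (a : Y),
     conv x a <->
     (forall c : Y, slt conv le 0 c ->
        exists N : nat, forall n, (N < n)%N ->
          slt conv le (a - c) (x n) /\ slt conv le (x n) (a + c))).
Proof.
split.
  move=> x a phi phi_incr; apply: (conv_comp HY) => N; exists N => n Nn.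
  suff : (n <= phi n)%N by exact: leq_trans.
  by elim: n {Nn} => // n IH; exact: leq_ltn_trans IH (phi_incr n).
split.
  move=> x y a [N xy]; split; apply: (conv_eq_eventually HY); exists N => n /xy //.
split.
  move=> x a k; split; first by apply: (conv_comp HY) => N; exists N => n /ltn_addr.
  move=> /(conv_comp HY (phi := subn^~ k)) xk; apply: (conv_eq_eventually HY) (xk _).
    by exists k => n kn; rewrite /= subnK.
  by move=> N; exists (N + k) => n; rewrite ltn_subRL addnC.
split; first exact: conv_scale_cvg HY.
split; first exact: conv_scale_vanishing HY.
split; first exact: conv_scale_bounded HY.
exact: conv_order_cvgE HY.
Qed.
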